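(* Let $S$ be a pomonoid and let $Emb$ be the class of all order-embeddings in $\mathbf{Pos}\text{-}S$. Then $(Emb, Emb^{\Box})$ is a weak factorization system in $\mathbf{Pos}\text{-}S$.
   Context: A pomonoid is a monoid with a compatible partial order; $\mathbf{Pos}\text{-}S$ is the category of (right) $S$-posets (posets with a monotone right monoid action of $S$) and action-preserving monotone maps. An order-embedding is an $S$-poset map $f$ with $f(a)\le f(a')\iff a\le a'$. For morphisms $l:A\to B$, $r:C\to D$, $l\Box r$ means every commutative square $ru=vl$ has a diagonal $d:B\to C$ with $dl=u$, $rd=v$; $\mathcal H^{\Box}=\{r: l\Box r\ \forall l\in\mathcal H\}$, ${}^{\Box}\mathcal H=\{l: l\Box r\ \forall r\in\mathcal H\}$. A weak factorization system is a pair $(\mathcal L,\mathcal R)$ such that every morphism factors as an $\mathcal L$-morphism followed by an $\mathcal R$-morphism, $\mathcal R=\mathcal L^{\Box}$ and $\mathcal L={}^{\Box}\mathcal R$. *)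

Set Implicit Arguments.

Record Pomonoid := {
  pm_car :> Type;
  pm_mul : pm_car -> pm_car -> pm_car;
  pm_one : pm_car;
  pm_le : pm_car -> pm_car -> Prop;
  pm_assoc : forall x y z, pm_mul (pm_mul x y) z = pm_mul x (pm_mul y z);
  pm_mul1l : forall x, pm_mul pm_one x = x;
  pm_mulr1 : forall x, pm_mul x pm_one = x;
  pm_refl : forall x, pm_le x x;
  pm_antisym : forall x y, pm_le x y -> pm_le y x -> x = y;
  pm_trans : forall x y z, pm_le x y -> pm_le y z -> pm_le x z;
  pm_compat : forall x x' y y', pm_le x x' -> pm_le y y' ->
                pm_le (pm_mul x y) (pm_mul x' y')
}.

Record SPoset (S : Pomonoid) := {
  sp_car :> Type;
  sp_le : sp_car -> sp_car -> Prop;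
  sp_act : sp_car -> pm_car S -> sp_car;
  sp_refl : forall a, sp_le a a;
  sp_antisym : forall a b, sp_le a b -> sp_le b a -> a = b;
  sp_trans : forall a b c, sp_le a b -> sp_le b c -> sp_le a c;
  sp_act1 : forall a, sp_act a (pm_one S) = a;
  sp_actM : forall a s t, sp_act (sp_act a s) t = sp_act a (pm_mul S s t);
  sp_act_mono : forall a a' (s t : pm_car S), sp_le a a' -> pm_le S s t ->
                  sp_le (sp_act a s) (sp_act a' t)
}.

Record SHom (S : Pomonoid) (A B : SPoset S) := {
  sh_fun :> sp_car A -> sp_car B;
  sh_mono : forall a a', sp_le A a a' -> sp_le B (sh_fun a) (sh_fun a');
  sh_act : forall a s, sh_fun (sp_act A a s) = sp_act B (sh_fun a) s
}.

Definition MorClass (S : Pomonoid) := forall A B : SPoset S, SHom A B -> Prop.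

Definition is_order_embedding (S : Pomonoid) (A B : SPoset S) (f : SHom A B) : Prop :=
  forall a a', sp_le B (f a) (f a') <-> sp_le A a a'.

Definition Emb (S : Pomonoid) : MorClass S := fun A B f => is_order_embedding f.

Definition llp (S : Pomonoid) (A B C D : SPoset S) (l : SHom A B) (r : SHom C D) : Prop :=
  forall (u : SHom A C) (v : SHom B D),
    (forall a, r (u a) = v (l a)) ->
    exists d : SHom B C, (forall a, d (l a) = u a) /\ (forall b, r (d b) = v b).

Definition rbox (S : Pomonoid) (H : MorClass S) : MorClass S :=
  fun C D r => forall (A B : SPoset S) (l : SHom A B), H A B l -> llp l r.

Definition lbox (S : Pomonoid) (H : MorClass S) : MorClass S :=
  fun A B l => forall (C D : SPoset S) (r : SHom C D), H C D r -> llp l r.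

Definition same_class (S : Pomonoid) (H K : MorClass S) : Prop :=
  forall (A B : SPoset S) (f : SHom A B), H A B f <-> K A B f.

Definition weak_factorization_system (S : Pomonoid) (L R : MorClass S) : Prop :=
  (forall (A B : SPoset S) (f : SHom A B),
     exists (C : SPoset S) (l : SHom A C) (r : SHom C B),
       L A C l /\ R C B r /\ (forall a, r (l a) = f a))
  /\ same_class R (rbox L)
  /\ same_class L (lbox R).

(* The embeddings have enough injectives: every S-poset A embeds, via
   a |-> (t |-> down-set of a t), into the S-poset of monotone maps from S to
   the power set of A, and such S-posets of monotone power-set-valued maps are
   injective with respect to embeddings (extend u along l by
   b |-> (t |-> union of the u a (1) with l a <= b t)).  Hence any f : A -> B
   factors as the embedding <unit, f> : A -> I(A) x B followed by the
   projection I(A) x B -> B, which lifts against embeddings because I(A) is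
   injective.  Finally, a map with the left lifting property against every such
   projection is a retract of an embedding, hence an embedding itself. *)

From Stdlib Require Import FunctionalExtensionality PropExtensionality ProofIrrelevance.

Set Implicit Arguments.

Section EmbeddingWFS.
Context {S : Pomonoid}.

Definition compH (A B C : SPoset S) (g : SHom B C) (f : SHom A B) : SHom A C :=
  @Build_SHom S A C (fun a => g (f a))
    (fun a a' H => sh_mono g _ _ (sh_mono f _ _ H))
    (fun a s => eq_trans (f_equal g (sh_act f a s)) (sh_act g (f a) s)).

Definition idH (A : SPoset S) : SHom A A :=
  @Build_SHom S A A (fun a => a) (fun a a' H => H) (fun a s => eq_refl).

Definition injective_obj (E : SPoset S) : Prop :=
  forall (A B : SPoset S) (l : SHom A B) (u : SHom A E),
    is_order_embedding l -> exists d : SHom B E, forall a, d (l a) = u a.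

Definition ProdSP (X Y : SPoset S) : SPoset S.
Proof.
  refine (@Build_SPoset S (sp_car X * sp_car Y)
            (fun p q => sp_le X (fst p) (fst q) /\ sp_le Y (snd p) (snd q))
            (fun p s => (sp_act X (fst p) s, sp_act Y (snd p) s)) _ _ _ _ _ _).
  - intros [x y]; split; apply sp_refl.
  - intros [x y] [x' y'] [H1 H2] [H3 H4]; simpl in *; f_equal; apply sp_antisym; auto.
  - intros [x y] [x' y'] [x'' y''] [H1 H2] [H3 H4]; simpl in *.
    split; eapply sp_trans; eauto.
  - intros [x y]; simpl; now rewrite !sp_act1.
  - intros [x y] s t; simpl; now rewrite !sp_actM.
  - intros [x y] [x' y'] s t [H1 H2] Hst; simpl in *; split; apply sp_act_mono; auto.
Defined.

Definition fstH (X Y : SPoset S) : SHom (ProdSP X Y) X :=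
  @Build_SHom S (ProdSP X Y) X fst (fun p q H => proj1 H) (fun p s => eq_refl).

Definition sndH (X Y : SPoset S) : SHom (ProdSP X Y) Y :=
  @Build_SHom S (ProdSP X Y) Y snd (fun p q H => proj2 H) (fun p s => eq_refl).

Definition pairH (A X Y : SPoset S) (f : SHom A X) (g : SHom A Y) : SHom A (ProdSP X Y).
Proof.
  refine (@Build_SHom S A (ProdSP X Y) (fun a => (f a, g a)) _ _).
  - intros a a' H; split; apply sh_mono; exact H.
  - intros a s; simpl; now rewrite (sh_act f), (sh_act g).
Defined.

Lemma pairH_emb (A X Y : SPoset S) (f : SHom A X) (g : SHom A Y) :
  is_order_embedding f -> is_order_embedding (pairH f g).
Proof.
  intros Hf a a'; split.
  - intros [H _]; apply Hf, H.
  - apply sh_mono.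
Qed.

Lemma sndH_rbox_emb (E Y : SPoset S) :
  injective_obj E -> rbox (@Emb S) (sndH E Y).
Proof.
  intros HE A B l Hl u v Hc.
  destruct (HE A B l (compH (fstH E Y) u) Hl) as [e He].
  exists (pairH e v); split.
  - intros a; simpl; rewrite He, <- (Hc a); simpl; now destruct (u a).
  - reflexivity.
Qed.

Definition PowMap (X : Type) :=
  { g : pm_car S -> X -> Prop | forall t t' x, pm_le S t t' -> g t x -> g t' x }.

Lemma PowMap_ext (X : Type) (g h : PowMap X) :
  (forall t x, proj1_sig g t x <-> proj1_sig h t x) -> g = h.
Proof.
  destruct g as [g Hg], h as [h Hh]; simpl; intros E.
  assert (g = h) as <-.
  { extensionality t; extensionality x; apply propositional_extensionality, E. }
  f_equal; apply proof_irrelevance.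
Qed.

Definition pow_act (X : Type) (g : PowMap X) (s : pm_car S) : PowMap X.
Proof.
  exists (fun t => proj1_sig g (pm_mul S s t)).
  intros t t' x Ht; apply (proj2_sig g); apply pm_compat; [apply pm_refl | exact Ht].
Defined.

Definition PowSP (X : Type) : SPoset S.
Proof.
  refine (@Build_SPoset S (PowMap X)
            (fun g h => forall t x, proj1_sig g t x -> proj1_sig h t x)
            (@pow_act X) _ _ _ _ _ _).
  - auto.
  - intros g h Hgh Hhg; apply PowMap_ext; split; auto.
  - auto.
  - intros g; apply PowMap_ext; intros t x; simpl; now rewrite pm_mul1l.
  - intros g s t; apply PowMap_ext; intros w x; simpl; now rewrite pm_assoc.
  - intros g g' s t Hg Hst w x Hx; simpl in *; apply Hg.
    apply (proj2_sig g) with (pm_mul S s w); [|exact Hx].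
    apply pm_compat; [exact Hst | apply pm_refl].
Defined.

Definition pow_unit_fun (A : SPoset S) (a : A) : PowMap A.
Proof.
  exists (fun t x => sp_le A x (sp_act A a t)).
  intros t t' x Ht Hx; eapply sp_trans; [exact Hx|].
  apply sp_act_mono; [apply sp_refl | exact Ht].
Defined.

Definition pow_unit (A : SPoset S) : SHom A (PowSP A).
Proof.
  refine (@Build_SHom S A (PowSP A) (@pow_unit_fun A) _ _).
  - intros a a' Ha t x Hx; simpl in *; eapply sp_trans; [exact Hx|].
    apply sp_act_mono; [exact Ha | apply pm_refl].
  - intros a s; apply PowMap_ext; intros t x; simpl; now rewrite sp_actM.
Defined.

Lemma pow_unit_emb (A : SPoset S) : is_order_embedding (pow_unit A).
Proof.
  intros a a'; split.
  - intros H; specialize (H (pm_one S) a); simpl in H.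
    rewrite !sp_act1 in H; apply H, sp_refl.
  - apply sh_mono.
Qed.

Definition pow_extend_fun (X : Type) (A B : SPoset S) (l : SHom A B)
    (u : SHom A (PowSP X)) (b : B) : PowMap X.
Proof.
  exists (fun t x => exists a, sp_le B (l a) (sp_act B b t) /\ proj1_sig (u a) (pm_one S) x).
  intros t t' x Ht [a [Hla Hx]]; exists a; split; [|exact Hx].
  eapply sp_trans; [exact Hla|]; apply sp_act_mono; [apply sp_refl | exact Ht].
Defined.

Definition pow_extend (X : Type) (A B : SPoset S) (l : SHom A B)
    (u : SHom A (PowSP X)) : SHom B (PowSP X).
Proof.
  refine (@Build_SHom S B (PowSP X) (pow_extend_fun l u) _ _).
  - intros b b' Hb t x [a [Hla Hx]]; exists a; split; [|exact Hx].
    eapply sp_trans; [exact Hla|]; apply sp_act_mono; [exact Hb | apply pm_refl].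
  - intros b s; apply PowMap_ext; intros t x; simpl; now rewrite sp_actM.
Defined.

(* Equivariance gives (u a)(t) = (u (a t))(1), so [u a] is recovered from the
   values at 1 of the [u a'] with [l a' <= l a t], i.e. [a' <= a t]. *)
Lemma pow_extend_comp (X : Type) (A B : SPoset S) (l : SHom A B)
    (u : SHom A (PowSP X)) :
  is_order_embedding l -> forall a, pow_extend l u (l a) = u a.
Proof.
  intros Hl a; apply PowMap_ext; intros t x; simpl; split.
  - intros [a' [Ha' Hx]].
    rewrite <- sh_act in Ha'; apply Hl in Ha'.
    apply (sh_mono u) in Ha'; apply Ha' in Hx.
    rewrite (sh_act u) in Hx; simpl in Hx; now rewrite pm_mulr1 in Hx.
  - intros Hx; exists (sp_act A a t); split.
    + rewrite sh_act; apply sp_refl.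
    + rewrite (sh_act u); simpl; now rewrite pm_mulr1.
Qed.

Lemma PowSP_injective (X : Type) : injective_obj (PowSP X).
Proof.
  intros A B l u Hl; exists (pow_extend l u); exact (pow_extend_comp u Hl).
Qed.

Lemma emb_factorization (A B : SPoset S) (f : SHom A B) :
  exists (C : SPoset S) (l : SHom A C) (r : SHom C B),
    @Emb S A C l /\ rbox (@Emb S) r /\ (forall a, r (l a) = f a).
Proof.
  exists (ProdSP (PowSP A) B), (pairH (pow_unit A) f), (sndH (PowSP A) B).
  split; [|split].
  - apply pairH_emb, pow_unit_emb.
  - apply sndH_rbox_emb, PowSP_injective.
  - reflexivity.
Qed.

Lemma emb_of_llp_factor (A B C : SPoset S) (l : SHom A B) (i : SHom A C)
    (r : SHom C B) :
  is_order_embedding i -> (forall a, r (i a) = l a) -> llp l r ->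
  is_order_embedding l.
Proof.
  intros Hi Hc Hl.
  destruct (Hl i (idH B) Hc) as [d [Hd _]].
  intros a a'; split.
  - intros H; apply Hi; rewrite <- !Hd; apply sh_mono, H.
  - apply sh_mono.
Qed.

End EmbeddingWFS.

Theorem mainTheorem3 (S : Pomonoid) :
  weak_factorization_system (@Emb S) (rbox (@Emb S)).
Proof.
  split; [exact (@emb_factorization S) | split].
  - intros A B f; reflexivity.
  - intros A B l; split.
    + intros Hl C D r Hr; exact (Hr A B l Hl).
    + intros Hl.
      destruct (emb_factorization l) as (C & i & r & Hi & Hr & Hc).
      exact (emb_of_llp_factor Hi Hc (Hl C B r Hr)).
Qed.
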